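(* Let $d>0$, $a\geq 7$ be integers with $\gcd(a,d)=1$, $\Gamma_4=\langle a,2a+d,3a+3d,4a+6d\rangle$ and $M=\Gamma_4\setminus\{0\}$. For $0\leq t\leq a-1$ let $(\mu_t,\nu_t,\xi_t)$ be as in the context, and for $s\geq 0$ let $\omega_{s,t}$ be as in the context. Then for all $0\leq t\leq a-1$ and $0\leq s\leq \lfloor a/6\rfloor+2$: $$\omega_{s,t}=\begin{cases}(4\mu_t+3\nu_t+2\xi_t)a+td & \text{if } 0\leq s\leq \mu_t+\nu_t+\xi_t,\\ (3\mu_t+2\nu_t+\xi_t+s)a+td & \text{if } \mu_t+\nu_t+\xi_t< s\leq \lfloor a/6\rfloor+2,\end{cases}$$ so the Apéry table has $\lfloor a/6\rfloor+3$ rows (indexed $s=0,\dots,\lfloor a/6\rfloor+2$) and $a$ columns. Moreover, the reduction number of the maximal ideal $\mathfrak{m}$ of $k[[t^a,t^{2a+d},t^{3a+3d},t^{4a+6d}]]$ with respect to $(t^a)$, i.e. the least $r$ such that $(n+1)M=a+nM$ for all $n\geq r$, equals $\lfloor a/6\rfloor+2$.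
   Context: For $1\leq i\leq a-1$ write $i=6\mu_i+q_i$ with $0\leq q_i<6$, set $(\nu_i,\xi_i)=(1,q_i-3)$ if $q_i\geq3$ and $(\nu_i,\xi_i)=(0,q_i)$ if $q_i<3$; set $(\mu_0,\nu_0,\xi_0)=(0,0,0)$. For $n\geq1$, $nM=M+\cdots+M$ ($n$ copies). The Apéry table entries are: $\omega_{0,t}=(4\mu_t+3\nu_t+2\xi_t)a+td$ (the element of $\mathrm{Ap}(\Gamma_4,a)$ congruent to $td$ mod $a$, with $\omega_{0,0}=0$), and for $s\geq1$, $\omega_{s,t}$ is the smallest element of $sM$ congruent to $td$ modulo $a$ (equivalently $\mathrm{Ap}(sM)=sM\setminus(a+sM)=\{\omega_{s,0},\dots,\omega_{s,a-1}\}$). *)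

From mathcomp Require Import all_boot.
Set Implicit Arguments. Unset Strict Implicit. Unset Printing Implicit Defensive.

Definition inGamma4 (a d x : nat) : Prop :=
  exists x1 x2 x3 x4 : nat,
    x = x1 * a + x2 * (2 * a + d) + x3 * (3 * a + 3 * d) + x4 * (4 * a + 6 * d).

Definition inM (a d x : nat) : Prop := inGamma4 a d x /\ x <> 0.

Definition inSM (a d s x : nat) : Prop :=
  exists l : seq nat, size l = s /\ (forall y, y \in l -> inM a d y) /\ sumn l = x.

Definition rowSet (a d s x : nat) : Prop :=
  if s == 0 then inGamma4 a d x else inSM a d s x.

Definition is_omega (a d s t w : nat) : Prop :=
  [/\ rowSet a d s w, w = t * d %[mod a] &
      forall v, rowSet a d s v -> v = t * d %[mod a] -> w <= v].

(* mu_t, nu_t, xi_t: t = 6 mu_t + q_t, (nu,xi) = (1,q-3) if q >= 3, (0,q) else.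
   For t = 0 this gives (0,0,0), matching the convention of the paper. *)
Definition mu (t : nat) : nat := t %/ 6.
Definition nu (t : nat) : nat := if 3 <= t %% 6 then 1 else 0.
Definition xi (t : nat) : nat := if 3 <= t %% 6 then t %% 6 - 3 else t %% 6.

Definition red_eq (a d n : nat) : Prop :=
  forall x, inSM a d n.+1 x <-> exists y, inSM a d n y /\ x = a + y.

Definition is_reduction_number (a d r : nat) : Prop :=
  (forall n, r <= n -> red_eq a d n) /\
  (forall r', (forall n, r' <= n -> red_eq a d n) -> r <= r').

From mathcomp Require Import all_boot zify.
Set Implicit Arguments. Unset Strict Implicit. Unset Printing Implicit Defensive.

(* Write g1 = a, g2 = 2a+d, g3 = 3a+3d, g4 = 4a+6d.  A sum of
   x1 g1 + x2 g2 + x3 g3 + x4 g4 equals A a + k d with k = x2 + 3x3 + 6x4 and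
   A = x1 + 2x2 + 3x3 + 4x4, and uses x1+x2+x3+x4 = A - (x2 + 2x3 + 3x4)
   generators.  For fixed k, the greedy choice (x4,x3,x2) = (mu_k,nu_k,xi_k)
   simultaneously minimises the "excess" x2 + 2x3 + 3x4 and the "cost"
   2x2 + 3x3 + 4x4 (the least possible A).  Hence x lies in sM (in Gamma_4 for
   s = 0) iff x = A a + k d with s + excess k <= A and cost k <= A.
   Since gcd(a,d) = 1, every element congruent to t d mod a has k = t + q a;
   for q >= 1 both excess and cost only grow, so the minimum of sM in that
   class is max(s + excess t, cost t) a + t d, which is the table of the
   theorem.  The same normal form shows (n+1)M = a + nM as soon as
   n >= mu_t + nu_t + xi_t for all t < a, i.e. n >= floor(a/6) + 2, and the
   column t = 6 floor(a/6) - 1 shows that n = floor(a/6) + 1 fails. *)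

(* Excess, number of non-a generators, and cost of the greedy representation
   k = xi_k * 1 + nu_k * 3 + mu_k * 6. *)

Definition excess (k : nat) : nat := 3 * mu k + 2 * nu k + xi k.
Definition len (k : nat) : nat := mu k + nu k + xi k.
Definition cost (k : nat) : nat := 4 * mu k + 3 * nu k + 2 * xi k.

Lemma cost_excess_len k : cost k = excess k + len k.
Proof. rewrite /cost /excess /len; lia. Qed.

Lemma mu_nu_xi_decomp k : k = 6 * mu k + 3 * nu k + xi k.
Proof. rewrite /mu /nu /xi; case: ifP => ?; lia. Qed.

Lemma excess_cost_min y2 y3 y4 :
  excess (y2 + 3 * y3 + 6 * y4) <= y2 + 2 * y3 + 3 * y4 /\
  cost (y2 + 3 * y3 + 6 * y4) <= 2 * y2 + 3 * y3 + 4 * y4.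
Proof. rewrite /excess /cost /mu /nu /xi; case: ifP => ?; lia. Qed.

(* Excess and cost are monotone along steps of at least 6 (they are
   piecewise increasing with period 6). *)
Lemma excess_cost_mono t k : t + 6 <= k -> excess t <= excess k /\ cost t <= cost k.
Proof. rewrite /excess /cost /mu /nu /xi => ?; do 2 case: ifP => ?; lia. Qed.

Lemma len_bound a t : t < a -> len t <= a %/ 6 + 2.
Proof. rewrite /len /mu /nu /xi => ?; case: ifP => ?; lia. Qed.

Section Semigroup.
Variables a d : nat.

Definition gen_comb (x1 x2 x3 x4 : nat) : nat :=
  x1 * a + x2 * (2 * a + d) + x3 * (3 * a + 3 * d) + x4 * (4 * a + 6 * d).

(* x is a sum of at least s generators; for s > 0 this is exactly sM. *)
Definition in_level (s x : nat) : Prop :=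
  exists x1 x2 x3 x4, x = gen_comb x1 x2 x3 x4 /\ s <= x1 + x2 + x3 + x4.

Lemma in_level_sumn (l : seq nat) :
  (forall y, y \in l -> inM a d y) -> in_level (size l) (sumn l).
Proof.
elim: l => [|y l IH] inl; first by exists 0, 0, 0, 0; rewrite /gen_comb /=; lia.
have [[y1 [y2 [y3 [y4 ->]]]] y_neq0] := inl y (mem_head _ _).
have [x1 [x2 [x3 [x4 [sumn_l len_l]]]]] : in_level (size l) (sumn l).
  by apply: IH => z zl; apply: inl; rewrite in_cons zl orbT.
exists (y1 + x1), (y2 + x2), (y3 + x3), (y4 + x4); move: y_neq0.
rewrite /= sumn_l /gen_comb; nia.
Qed.

Lemma inSM_in_level s x : inSM a d s x -> in_level s x.
Proof. by move=> [l [<- [inl <-]]]; apply: in_level_sumn. Qed.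

Lemma inM_sumn (l : seq nat) :
  l != [::] -> (forall y, y \in l -> inM a d y) -> inM a d (sumn l).
Proof.
move=> l_neq0 inl; split.
  have [x1 [x2 [x3 [x4 [-> _]]]]] := in_level_sumn inl.
  by exists x1, x2, x3, x4.
case: l l_neq0 inl => [//|y l] _ inl /=.
have [_ y_neq0] := inl y (mem_head _ _); lia.
Qed.

(* A sum of at least s elements of M lies in sM: merge the surplus summands
   into the last one. *)
Lemma inSM_sumn s (l : seq nat) : 0 < s -> s <= size l ->
  (forall y, y \in l -> inM a d y) -> inSM a d s (sumn l).
Proof.
move=> s_gt0 s_le inl.
exists (rcons (take (s - 1) l) (sumn (drop (s - 1) l))); split; last split.
- by rewrite size_rcons size_takel; lia.
- move=> y; rewrite mem_rcons in_cons => /orP [/eqP -> | /mem_take]; last exact: inl.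
  apply: inM_sumn => [|z /mem_drop]; last exact: inl.
  by rewrite -size_eq0 size_drop subn_eq0 -ltnNge; apply: leq_trans s_le; lia.
- by rewrite sumn_rcons -sumn_cat cat_take_drop.
Qed.

Lemma in_level_inSM s x : 0 < s -> 0 < a -> in_level s x -> inSM a d s x.
Proof.
move=> s_gt0 a_gt0 [x1 [x2 [x3 [x4 [-> s_le]]]]].
set l := nseq x1 a ++ nseq x2 (2 * a + d) ++ nseq x3 (3 * a + 3 * d)
         ++ nseq x4 (4 * a + 6 * d).
have -> : gen_comb x1 x2 x3 x4 = sumn l by rewrite /l !sumn_cat !sumn_nseq /gen_comb; lia.
apply: inSM_sumn => //; first by rewrite /l !size_cat !size_nseq; lia.
move=> y; rewrite /l !mem_cat !mem_nseq => /orP [|/orP [|/orP []]] /andP [_ /eqP ->].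
- by split; [exists 1, 0, 0, 0 | ]; lia.
- by split; [exists 0, 1, 0, 0 | ]; lia.
- by split; [exists 0, 0, 1, 0 | ]; lia.
- by split; [exists 0, 0, 0, 1 | ]; lia.
Qed.

Lemma in_level_addl_a s y : in_level s y -> in_level s.+1 (a + y).
Proof.
move=> [x1 [x2 [x3 [x4 [-> s_le]]]]].
by exists x1.+1, x2, x3, x4; split; rewrite /gen_comb; lia.
Qed.

Lemma rowSet_in_level s x : 0 < a -> rowSet a d s x <-> in_level s x.
Proof.
move=> a_gt0; rewrite /rowSet; case: (posnP s) => [-> | s_gt0] /=.
  split=> [[x1 [x2 [x3 [x4 ->]]]] | [x1 [x2 [x3 [x4 [-> _]]]]]].
    by exists x1, x2, x3, x4.
  by exists x1, x2, x3, x4.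
by split; [exact: inSM_in_level | exact: in_level_inSM].
Qed.

Lemma in_level_normal_form s x :
  in_level s x <->
  exists A k, [/\ x = A * a + k * d, s + excess k <= A & cost k <= A].
Proof.
split=> [[x1 [x2 [x3 [x4 [-> s_le]]]]] | [A [k [-> s_le cost_le]]]].
  have [ex_le co_le] := excess_cost_min x2 x3 x4.
  exists (x1 + 2 * x2 + 3 * x3 + 4 * x4), (x2 + 3 * x3 + 6 * x4).
  by split; rewrite /gen_comb; lia.
set x1 := A - cost k; have A_eq : A = x1 + cost k by rewrite /x1; lia.
exists x1, (xi k), (nu k), (mu k).
move: (mu_nu_xi_decomp k) s_le cost_le.
rewrite A_eq cost_excess_len /gen_comb /excess /len.
set m := mu k; set n := nu k; set z := xi k => ->; lia.
Qed.
End Semigroup.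

Lemma mul_coprime_mod_cancel a d k t :
  coprime a d -> k * d = t * d %[mod a] -> k = t %[mod a].
Proof.
move=> co; wlog t_le_k : k t / t <= k.
  move=> cancel; case: (leqP t k) => [/cancel // | /ltnW /cancel cancel' /esym].
  by move=> /cancel' /esym.
move=> /eqP; rewrite eqn_mod_dvd ?leq_mul // -mulnBl Gauss_dvdl // => dvd.
by apply/eqP; rewrite eqn_mod_dvd.
Qed.

Section Apery.
Variables a d : nat.

Definition omega_value (s t : nat) : nat := maxn (s + excess t) (cost t) * a + t * d.

Lemma omega_value_cases s t :
  omega_value s t =
  if s <= mu t + nu t + xi t
  then (4 * mu t + 3 * nu t + 2 * xi t) * a + t * d
  else (3 * mu t + 2 * nu t + xi t + s) * a + t * d.
Proof. by rewrite /omega_value /excess /cost; case: leqP => ?; congr (_ * a + _); lia. Qed.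

Hypotheses (d_gt0 : 0 < d) (a_ge7 : 7 <= a) (co_ad : coprime a d).

Let a_gt0 : 0 < a. Proof. lia. Qed.

Lemma omega_value_in_level s t : in_level a d s (omega_value s t).
Proof.
apply/in_level_normal_form; exists (maxn (s + excess t) (cost t)), t.
by split; rewrite ?leq_maxl ?leq_maxr.
Qed.

Lemma omega_value_le s t v : t < a -> in_level a d s v -> v = t * d %[mod a] ->
  omega_value s t <= v.
Proof.
move=> t_lt_a /in_level_normal_form [A [k [-> s_le cost_le]]] v_mod.
have k_mod : k %% a = t.
  have -> : k = t %[mod a].
    by apply: (mul_coprime_mod_cancel co_ad); rewrite -v_mod modnMDl.
  exact: modn_small.
have [t_le_k [ex_le co_le]] : t <= k /\ excess t <= excess k /\ cost t <= cost k.
  have k_eq := divn_eq k a; rewrite k_mod in k_eq.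
  case: (posnP (k %/ a)) => [q_eq0 | q_gt0].
    by have -> : k = t by rewrite k_eq q_eq0.
  have a_le : a <= k %/ a * a by rewrite leq_pmull.
  split; [lia | apply: excess_cost_mono; lia].
rewrite /omega_value leq_add ?leq_mul //.
by rewrite geq_max; apply/andP; split; lia.
Qed.

Lemma is_omega_value s t : t < a -> is_omega a d s t (omega_value s t).
Proof.
move=> t_lt_a; split.
- by apply/rowSet_in_level; [exact: a_gt0 | exact: omega_value_in_level].
- by rewrite /omega_value modnMDl.
- by move=> v /(rowSet_in_level _ _ _ a_gt0); exact: omega_value_le.
Qed.

(* (n+1)M = a + nM for n >= floor(a/6) + 2: an element A a + k d of (n+1)M
   minus a stays in nM, by lowering A when k < a (len_bound) and by trading
   a d for d a when k >= a. *)
Lemma red_eq_large n : a %/ 6 + 2 <= n -> red_eq a d n.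
Proof.
move=> n_ge x; split => [x_in | [y [y_in ->]]]; last first.
  apply: in_level_inSM => //.
  exact/in_level_addl_a/inSM_in_level.
have /in_level_normal_form [A [k [x_eq s_le cost_le]]] := inSM_in_level x_in.
have [A' A_eq] : exists A', A = A'.+1 by exists (A - 1); lia.
subst A; have [a_le_k | k_lt_a] := leqP a k.
  have [k' k_eq] : exists k', k = a + k' by exists (k - a); lia.
  subst k; have [ex_le co_le] : excess k' <= excess (a + k') /\ cost k' <= cost (a + k').
    by apply: excess_cost_mono; lia.
  exists ((A' + d) * a + k' * d); split; last by rewrite x_eq; lia.
  apply: in_level_inSM; [lia | exact: a_gt0 | ].
  by apply/in_level_normal_form; exists (A' + d), k'; split; lia.
have len_le := len_bound k_lt_a; have cost_eq := cost_excess_len k.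
exists (A' * a + k * d); split; last by rewrite x_eq; lia.
apply: in_level_inSM; [lia | exact: a_gt0 | ].
by apply/in_level_normal_form; exists A', k; split; lia.
Qed.

(* For n = floor(a/6) + 1 the column t = 6 floor(a/6) - 1 (mu = m - 1, nu = 1,
   xi = 2) has the same minimum (4m+3) a + t d in levels n and n + 1, so this
   element of (n+1)M is not in a + nM. *)
Lemma not_red_eq_critical : ~ red_eq a d (a %/ 6 + 1).
Proof.
set m := a %/ 6; move=> red.
set t := 6 * m - 1.
have t_lt_a : t < a by rewrite /t /m; lia.
have ex_t : excess t = 3 * m + 1.
  by rewrite /excess /t /mu /nu /xi; case: ifP => ?; lia.
have co_t : cost t = 4 * m + 3.
  by rewrite /cost /t /mu /nu /xi; case: ifP => ?; lia.
have x_in : inSM a d (m + 1).+1 (omega_value (m + 1).+1 t).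
  by apply: in_level_inSM; [lia | exact: a_gt0 | exact: omega_value_in_level].
have [y [/inSM_in_level y_in x_eq]] := (red (omega_value (m + 1).+1 t)).1 x_in.
have y_mod : y = t * d %[mod a] by rewrite -(modnDl y a) -x_eq modnMDl.
have := omega_value_le t_lt_a y_in y_mod.
by move: x_eq; rewrite /omega_value ex_t co_t; lia.
Qed.

Lemma reduction_number : is_reduction_number a d (a %/ 6 + 2).
Proof.
split=> [|r red]; first exact: red_eq_large.
rewrite leqNgt; apply/negP => r_lt; apply: not_red_eq_critical.
by apply: red; lia.
Qed.
End Apery.

Theorem corollary6p4 (a d : nat) :
  0 < d -> 7 <= a -> coprime a d ->
  (forall t s, t < a -> s <= a %/ 6 + 2 ->
     is_omega a d s t
       (if s <= mu t + nu t + xi t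
        then (4 * mu t + 3 * nu t + 2 * xi t) * a + t * d
        else (3 * mu t + 2 * nu t + xi t + s) * a + t * d)) /\
  is_reduction_number a d (a %/ 6 + 2).
Proof.
move=> d_gt0 a_ge7 co_ad; split; last exact: reduction_number.
move=> t s t_lt_a _; rewrite -omega_value_cases.
exact: is_omega_value.
Qed.
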